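(* For every integer $n\ge3$ with $n\not\equiv 2\pmod 4$ and every positive integer $s$, there exists a $(1,s,n)$-AONT.
   Context: Let $X$ be a finite alphabet with $|X|=v$ and $0\le t\le s$. A $(t,s,v)$-AONT is a bijection $\phi:X^s\to X^s$ such that for every $I\subseteq\{1,\dots,s\}$ with $|I|=t$ and every $J\subseteq\{1,\dots,s\}$ with $|J|=s-t$, the map $x\mapsto\big((x_i)_{i\in I},(\phi(x)_j)_{j\in J}\big)$ is a bijection $X^s\to X^t\times X^{s-t}$. *)

From mathcomp Require Import all_boot.
Set Implicit Arguments. Unset Strict Implicit. Unset Printing Implicit Defensive.

Definition word (X : finType) (s : nat) := {ffun 'I_s -> X}.

(* For I, J subsets of {1..s} (here {0..s-1}), the map
   x |-> ((x_i)_{i in I}, (phi x)_j_{j in J})  from X^s to X^I x X^J. *)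
Definition aont_proj (X : finType) (s : nat) (phi : word X s -> word X s)
  (I J : {set 'I_s}) (x : word X s)
  : {ffun {i : 'I_s | i \in I} -> X} * {ffun {j : 'I_s | j \in J} -> X} :=
  ([ffun i => x (val i)], [ffun j => phi x (val j)]).

(* (t,s,v)-AONT over alphabet X (with |X| = v): a bijection phi : X^s -> X^s
   such that for all I, J with |I| = t, |J| = s - t the map above is a bijection. *)
Definition is_AONT (X : finType) (t s : nat) (phi : word X s -> word X s) : Prop :=
  bijective phi /\
  forall I J : {set 'I_s}, #|I| = t -> #|J| = s - t ->
    bijective (aont_proj phi I J).

(* If f is an orthomorphism of a finite abelian group X, i.e. both f and
   x |-> x - f x are injective, then psi y := (\sum_(k <= i) y_k +
   \sum_(k > i) f y_k)_i is a bijection of X^s whose inverse is a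
   (1, s, |X|)-AONT: changing only the output coordinate y_j changes every
   input coordinate by y_j - y'_j or by f y_j - f y'_j, neither of which
   vanishes.  Orthomorphisms exist on Z_m for m odd (x |-> -x), on Z_2^2 and
   Z_2^3, and are stable under direct products; this covers every order
   n > 0 with n <> 2 mod 4. *)
From HB Require Import structures.
From mathcomp Require Import all_boot all_algebra zify.
Import GRing.Theory.

Set Implicit Arguments.
Unset Strict Implicit.
Unset Printing Implicit Defensive.

Definition orthomorphism {X : zmodType} (f : X -> X) : Prop :=
  injective f /\ injective (fun x => (x - f x)%R).

Definition has_orthomorphism (n : nat) : Prop :=
  exists (X : finZmodType) (f : X -> X), #|X| = n /\ orthomorphism f.

Lemma bij_aont_proj (X : finType) (s t : nat) (phi : word X s -> word X s)
    (I J : {set 'I_s}) :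
  #|I| = t -> #|J| = s - t -> t <= s ->
  injective (aont_proj phi I J) -> bijective (aont_proj phi I J).
Proof.
move=> cI cJ ts inj_proj; apply: inj_card_bij inj_proj _.
rewrite card_prod !card_ffun !card_sig.
by rewrite -[#|[pred x in I]|]/#|I| -[#|[pred x in J]|]/#|J| cI cJ card_ord
  -expnD subnKC.
Qed.

Section OrthomorphismAONT.

Variables (X : finZmodType) (f : X -> X) (s : nat).
Hypothesis orth_f : orthomorphism f.

Definition psi (y : word X s) : word X s :=
  [ffun i : 'I_s => (\sum_(k < s) (if (k <= i)%N then y k else f (y k)))%R].

Lemma psi_sub_off1 (y y' : word X s) (j i : 'I_s) :
  (forall k, k != j -> y k = y' k) ->
  (psi y i - psi y' i =
     if (j <= i)%N then y j - y' j else f (y j) - f (y' j))%R.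
Proof.
move=> eq_off_j; rewrite !ffunE -sumrB (bigD1 j) //= big1 ?addr0.
  by case: ifP.
by move=> k /eq_off_j ->; rewrite subrr.
Qed.

Lemma psi_eq_off1 (y y' : word X s) (j i : 'I_s) :
  (forall k, k != j -> y k = y' k) -> psi y i = psi y' i -> y = y'.
Proof.
move=> eq_off_j eq_i; apply/ffunP=> k.
have [->|] := eqVneq k j; last exact: eq_off_j.
have /esym/eqP := psi_sub_off1 i eq_off_j; rewrite eq_i subrr.
by case: ifP => _; rewrite subr_eq0 => /eqP // /orth_f.1.
Qed.

Lemma psi_subS (y : word X s) (i j : 'I_s) : val j = (val i).+1 ->
  (psi y j - psi y i = y j - f (y j))%R.
Proof.
move=> Ej; rewrite !ffunE -sumrB (bigD1 j) //= big1 ?addr0.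
  by rewrite leqnn Ej ltnn.
move=> k neq_kj; have neq_kSi : val k != (val i).+1.
  by rewrite -Ej; apply: contra neq_kj => /eqP /val_inj ->.
by rewrite Ej leq_eqVlt (negbTE neq_kSi) /= ltnS subrr.
Qed.

Lemma psi_inj : injective psi.
Proof.
move=> y y' eq_psi.
have eq_pos (k : 'I_s) : 0 < k -> y k = y' k.
  move=> k_gt0; have pk_lt : (val k).-1 < s.
    exact: leq_ltn_trans (leq_pred _) (ltn_ord k).
  have Ek : val k = (val (Ordinal pk_lt)).+1 by rewrite /= prednK.
  by apply: orth_f.2; rewrite /= -(psi_subS y Ek) -(psi_subS y' Ek) eq_psi.
apply/ffunP=> k; have [k0|/eq_pos //] := posnP k.
suff -> : y = y' by [].
apply: (psi_eq_off1 (j := k) (i := k)); last by rewrite eq_psi.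
move=> k' neq_k'k; apply: eq_pos; rewrite lt0n.
by apply: contra neq_k'k => /eqP k'0; apply/eqP/val_inj; rewrite /= k0 k'0.
Qed.

Lemma psi_inverse_AONT : exists phi : word X s -> word X s, is_AONT 1 phi.
Proof.
have [phi psiK phiK] := injF_bij psi_inj.
exists phi; split; first by exists psi.
move=> I J cI cJ.
have s_gt0 : 0 < s by have := max_card I; rewrite cI card_ord.
apply: (bij_aont_proj cI cJ s_gt0) => x x' /pair_equal_spec[/ffunP eqI /ffunP eqJ].
have [i Ii] : exists i, I = [set i] by apply/cards1P/eqP.
have [j Jj] : exists j, ~: J = [set j].
  by apply/cards1P/eqP; rewrite cardsCs setCK cJ card_ord subKn.
have eq_off_j k : k != j -> phi x k = phi x' k.
  move=> neq_kj; have kJ : k \in J by rewrite -[J]setCK Jj !inE.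
  by have := eqJ (exist _ k kJ); rewrite !ffunE.
have eq_i : psi (phi x) i = psi (phi x') i.
  have iI : i \in I by rewrite Ii set11.
  by rewrite !phiK; have := eqI (exist _ i iI); rewrite !ffunE.
by rewrite -[x]phiK -[x']phiK (psi_eq_off1 eq_off_j eq_i).
Qed.

End OrthomorphismAONT.

Lemma double_inj_mod (m x y : nat) : odd m -> x < m -> y < m ->
  x.*2 = y.*2 %[mod m] -> x = y.
Proof.
move=> odd_m xm ym eq2.
(* m.+1./2 is an inverse of 2 modulo m *)
have half_inv z : z = z.*2 * m.+1./2 %[mod m].
  have double_half : m.+1./2.*2 = m.+1 by rewrite -[RHS]odd_double_half /= odd_m.
  by rewrite -muln2 -mulnA mul2n double_half mulnS addnC modnMDl.
by rewrite -(modn_small xm) -(modn_small ym) half_inv [y %% m]half_inv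
  -modnMml eq2 modnMml.
Qed.

Lemma oppr_orthomorphism (m : nat) :
  odd m.+1 -> orthomorphism (fun x : 'I_m.+1 => (- x)%R).
Proof.
move=> odd_m; split; first exact: oppr_inj.
move=> x y /= /(congr1 val); rewrite !opprK /= !addnn => eq2.
exact/ord_inj/(double_inj_mod odd_m (ltn_ord x) (ltn_ord y)).
Qed.

Section SmallOrthomorphisms.
Local Open Scope ring_scope.
Variable G : zmodType.

Lemma orthomorphism2 : orthomorphism (fun p : G * G => (p.2, p.1 + p.2)).
Proof.
split=> [[a b] [c d] /= [-> /addIr ->] // | [a b] [c d] /= [eq1 eq2]].
have eq_ac : a = c.
  by move: eq2; rewrite !opprD [b + _]addrCA [d + _]addrCA !subrr !addr0
    => /oppr_inj.
by move: eq1; rewrite eq_ac => /addrI /oppr_inj ->.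
Qed.

Lemma orthomorphism3 :
  orthomorphism (fun p : G * (G * G) => (- p.2.2, (p.1 + p.2.2, p.2.1))).
Proof.
split=> [[a [b c]] [a' [b' c']] /= [/oppr_inj eq_c] | ].
  by rewrite eq_c => /addIr -> ->.
move=> [a [b c]] [a' [b' c']] /= [eq1 eq2 eq3]; rewrite !opprK in eq1.
have eq_b : b = b' by have := congr2 +%R eq2 eq1; rewrite !subrK.
move: eq3; rewrite -eq_b => /addIr eq_c.
by move: eq1; rewrite -eq_c => /addIr ->.
Qed.

End SmallOrthomorphisms.

HB.instance Definition _ (X Y : finZmodType) := GRing.Zmodule.on (X * Y)%type.

Lemma has_orthomorphismM (a b : nat) :
  has_orthomorphism a -> has_orthomorphism b -> has_orthomorphism (a * b).
Proof.
move=> [X [f [cX [f_inj fB_inj]]]] [Y [h [cY [h_inj hB_inj]]]].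
exists (X * Y)%type, (fun p => (f p.1, h p.2)).
split; first by rewrite card_prod cX cY.
by split=> [[p1 p2] [q1 q2] /= [/f_inj -> /h_inj ->] | [p1 p2] [q1 q2] /=
  [/fB_inj -> /hB_inj ->]].
Qed.

Lemma has_orthomorphism_odd (m : nat) : odd m -> has_orthomorphism m.
Proof.
case: m => // m odd_m.
exists ('I_m.+1 : finZmodType), (fun x => - x)%R.
by split; [rewrite card_ord | exact: oppr_orthomorphism].
Qed.

Lemma has_orthomorphism4 : has_orthomorphism 4.
Proof.
eexists ('Z_2 * 'Z_2 : finZmodType)%type, _.
by split; [rewrite card_prod card_ord | exact: orthomorphism2].
Qed.

Lemma has_orthomorphism8 : has_orthomorphism 8.
Proof.
eexists ('Z_2 * ('Z_2 * 'Z_2) : finZmodType)%type, _.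
by split; [rewrite !card_prod card_ord | exact: orthomorphism3].
Qed.

Lemma has_orthomorphism_mod4 (n : nat) :
  0 < n -> n %% 4 <> 2 -> has_orthomorphism n.
Proof.
elim/ltn_ind: n => n IH n_gt0 n_mod4.
have [odd_n|even_n] := boolP (odd n); first exact: has_orthomorphism_odd.
have [quarter_mod4|quarter_mod4] := eqVneq (n %/ 4 %% 4) 2.
  have -> : n = 8 * (n %/ 8) by lia.
  by apply: has_orthomorphismM has_orthomorphism8 (has_orthomorphism_odd _); lia.
have -> : n = 4 * (n %/ 4) by lia.
by apply: has_orthomorphismM has_orthomorphism4 (IH _ _ _ _); lia.
Qed.

Theorem corollary3p4 :
  forall n s : nat, 3 <= n -> n %% 4 <> 2 -> 0 < s ->
  exists (X : finType) (phi : word X s -> word X s),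
    #|X| = n /\ is_AONT 1 phi.
Proof.
move=> n s n_ge3 n_mod4 _.
have [X [f [cX orth_f]]] := has_orthomorphism_mod4 (ltnW (ltnW n_ge3)) n_mod4.
have [phi AONT_phi] := psi_inverse_AONT s orth_f.
by exists X, phi.
Qed.
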